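(* Let $\gamma=(\alpha,\beta)\in\mathfrak{D}$ and $T=T_\gamma$. For every integer $\ell\ge1$ there exist $C_1,C_2>0$ depending on $\gamma,\ell$ such that for all $m\ge1$, $$\sup_{x\in(0,1):\,T^m(x)\ge b_\ell}\frac{1}{(T^m)'(x)}\le C_1\,m^{-1-\frac1{\alpha\beta}},\qquad \sup_{x\in(0,1):\,T^m(x)\ge b_\ell}\frac{(T^m)''(x)}{((T^m)'(x))^2}\le C_2.$$
   Context: $\mathfrak{D}=\{(\alpha,\beta)\in(0,1)\times[1,\infty):\alpha\beta<1\}$. For $\gamma=(\alpha,\beta)\in\mathfrak{D}$, $T_\gamma(x)=x(1+2^\alpha x^\alpha)$ on $[0,\tfrac12)$ and $T_\gamma(x)=2^\beta(x-\tfrac12)^\beta$ on $[\tfrac12,1]$. Let $f_{\gamma,1}(x)=x(1+2^\alpha x^\alpha)$ on $[0,\tfrac12]$ (a bijection onto $[0,1]$) and $b_\ell=f_{\gamma,1}^{-\ell}(\tfrac12)$, the $\ell$-th preimage of $\tfrac12$ under the left branch. *)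

From Stdlib Require Import Reals.
From Coquelicot Require Import Coquelicot.
Open Scope R_scope.

Definition rpow (a y : R) : R :=
  if Rlt_dec 0 a then Rpower a y else 0.

Definition in_D (alpha beta : R) : Prop :=
  0 < alpha < 1 /\ 1 <= beta /\ alpha * beta < 1.

(* T_gamma(x) = x(1 + 2^alpha x^alpha) on [0,1/2),
   T_gamma(x) = 2^beta (x - 1/2)^beta on [1/2,1].
   (Note 2^a x^a = (2x)^a for x >= 0.) *)
Definition Tmap (alpha beta : R) (x : R) : R :=
  if Rlt_dec x (1/2) then x * (1 + rpow (2 * x) alpha)
  else rpow (2 * (x - 1/2)) beta.

Definition f1 (alpha : R) (x : R) : R := x * (1 + rpow (2 * x) alpha).

Definition Titer (alpha beta : R) (m : nat) (x : R) : R :=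
  Nat.iter m (Tmap alpha beta) x.

(* Both derivatives of T^m are chain-rule products along the orbit, which avoids the
   singular points 0 and 1/2 as long as T^m x > 0.

   Distortion: on each branch T'' + T' (2/z) <= (2 / T z) T'^2, so the bound
   (T^m)'' <= (2 / T^m x) ((T^m)')^2 survives one more step; and T^m x >= b.

   Expansion: with t = (2z)^alpha, h(z) = z t / (1 + t) and gam = 1 + 1/(alpha beta), the weight
   G_k(z) = (k + K + A/t)^gam h(z), A = 4/alpha, K large, satisfies G_(k+1)(T z) <= T'(z) G_k(z).
   On the left branch A/t drops by at least 1, which pays for k + 1.  On the right branch the
   jump of A/t is absorbed by T': when T z > 1/4 because T' >= rho > 1 there, and when
   T z <= 1/4 because w t(w)^(1 - gam) = (2w)^(1 - 1/beta) / 2.  Hence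
   (T^m)'(x) >= G_m(T^m x) / G_0(x) >= m^gam h(b) / M. *)

From Stdlib Require Import Reals Lra Lia.
From Coquelicot Require Import Coquelicot.
Open Scope R_scope.

(** * Real powers *)

Lemma Rpower_pos x y : 0 < Rpower x y.
Proof. apply exp_pos. Qed.

Lemma Rpower_1_l y : Rpower 1 y = 1.
Proof. unfold Rpower. rewrite ln_1, Rmult_0_r. apply exp_0. Qed.

Lemma Rpower_minus_1 x p : 0 < x -> Rpower x (p - 1) = Rpower x p / x.
Proof.
  intros Hx. unfold Rminus. rewrite Rpower_plus, Rpower_Ropp, Rpower_1 by exact Hx.
  reflexivity.
Qed.

Lemma Rpower_Rinv_l x y : 0 < x -> Rpower (/ x) y = Rpower x (- y).
Proof. intros Hx. unfold Rpower. rewrite ln_Rinv by exact Hx. f_equal; ring. Qed.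

Lemma Rpower_lt_1 x y : 0 < y -> 0 < x < 1 -> Rpower x y < 1.
Proof. intros Hy Hx. rewrite <- (Rpower_1_l y). apply Rlt_Rpower_l; lra. Qed.

Lemma Rpower_le_1 x y : 0 <= y -> 0 < x <= 1 -> Rpower x y <= 1.
Proof. intros Hy Hx. rewrite <- (Rpower_1_l y). apply Rle_Rpower_l; lra. Qed.

Lemma exp_le_exp x y : x <= y -> exp x <= exp y.
Proof. intros [Hlt| ->]; [left; apply exp_increasing, Hlt | lra]. Qed.

Lemma Rpower_le_self x y : 0 < x < 1 -> 1 <= y -> Rpower x y <= x.
Proof.
  intros Hx Hy. unfold Rpower. rewrite <- (exp_ln x) at 2 by lra. apply exp_le_exp.
  assert (ln x < 0) by (rewrite <- ln_1; apply ln_increasing; lra). nra.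
Qed.

Lemma ln_ge_1_minus_inv x : 0 < x -> 1 - / x <= ln x.
Proof.
  intros Hx. assert (H := exp_ineq1_le (ln (/ x))).
  rewrite exp_ln, ln_Rinv in H by (try apply Rinv_0_lt_compat; lra). lra.
Qed.

Lemma exp_tangent x y : exp x * (1 + (y - x)) <= exp y.
Proof.
  replace y with (x + (y - x)) at 2 by ring. rewrite exp_plus.
  apply Rmult_le_compat_l; [left; apply exp_pos | apply exp_ineq1_le].
Qed.

Lemma exp_convex a x y : 0 <= a <= 1 ->
  exp (a * x + (1 - a) * y) <= a * exp x + (1 - a) * exp y.
Proof.
  intros Ha. set (z := a * x + (1 - a) * y).
  assert (Hx := exp_tangent z x). assert (Hy := exp_tangent z y).
  assert (Hz : exp z = a * (exp z * (1 + (x - z))) + (1 - a) * (exp z * (1 + (y - z))))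
    by (unfold z; ring).
  nra.
Qed.

Lemma Rpower_1_plus_le a t : 0 <= a <= 1 -> 0 <= t -> Rpower (1 + t) a <= 1 + a * t.
Proof.
  intros Ha Ht. unfold Rpower.
  replace (a * ln (1 + t)) with (a * ln (1 + t) + (1 - a) * 0) by ring.
  eapply Rle_trans; [apply exp_convex, Ha|].
  rewrite exp_ln, exp_0 by lra. lra.
Qed.

Lemma Rpower_1_plus_ge a t : 0 <= a -> 0 <= t -> 1 + a * (t / (1 + t)) <= Rpower (1 + t) a.
Proof.
  intros Ha Ht. unfold Rpower.
  assert (H1 := exp_ineq1_le (a * ln (1 + t))).
  assert (H2 := ln_ge_1_minus_inv (1 + t) ltac:(lra)).
  replace (1 - / (1 + t)) with (t / (1 + t)) in H2 by (field; lra).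
  assert (a * (t / (1 + t)) <= a * ln (1 + t)) by (apply Rmult_le_compat_l; lra).
  lra.
Qed.

Lemma ln_2_lt_1 : ln 2 < 1.
Proof.
  rewrite <- (ln_exp 1). apply ln_increasing; [lra|].
  assert (H := exp_ineq1 1 ltac:(lra)). lra.
Qed.

Lemma ln_4_gt_1 : 1 < ln 4.
Proof. replace 4 with (2 * 2) by ring. rewrite ln_mult by lra. assert (H := ln_lt_2). lra. Qed.

Lemma Rpower_2_le x : 1 <= x -> Rpower 2 (1 - 1 / x) <= x.
Proof.
  intros Hx. unfold Rpower. rewrite <- (exp_ln x) at 2 by lra. apply exp_le_exp.
  assert (H1 := ln_ge_1_minus_inv x ltac:(lra)). assert (H2 := ln_2_lt_1).
  assert (H3 : 0 < ln 2) by (rewrite <- ln_1; apply ln_increasing; lra).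
  assert (Hinv : / x <= 1) by (rewrite <- Rinv_1; apply Rinv_le_contravar; lra).
  unfold Rdiv. rewrite Rmult_1_l. nra.
Qed.

Lemma one_minus_inv_bounds x : 1 <= x -> 0 <= 1 - 1 / x < 1.
Proof.
  intros Hx. assert (0 < 1 / x <= 1) by (split; [apply Rdiv_lt_0_compat | apply Rle_div_l]; lra).
  lra.
Qed.

Lemma Rpower_2_neg_lt_1 y : 0 < y -> 0 < Rpower 2 (- y) < 1.
Proof.
  intros Hy. split; [apply Rpower_pos|]. rewrite <- (Rpower_O 2) by lra. apply Rpower_lt; lra.
Qed.

Lemma Rdiv_le_swap x y k : 0 < y -> 0 < k -> x / y <= k -> x / k <= y.
Proof.
  intros Hy Hk H. apply Rle_div_l in H; [|lra]. apply Rle_div_l; lra.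
Qed.

(* Any constant in (1, inf_(x >= 1) (x/2) 4^(1/x)) would do. *)
Definition rho : R := (1 + ln 4) / 2.

Lemma rho_gt_1 : 1 < rho.
Proof. unfold rho. assert (H := ln_4_gt_1). lra. Qed.

(* [2 x w^(1 - 1/x) >= (x/2) 4^(1/x) >= (x + ln 4)/2] for [w >= 1/4]. *)
Lemma rho_le x w : 1 <= x -> 1 / 4 <= w -> rho <= 2 * x * Rpower w (1 - 1 / x).
Proof.
  intros Hx Hw.
  assert (He := one_minus_inv_bounds x Hx).
  assert (H1 : Rpower (1 / 4) (1 - 1 / x) <= Rpower w (1 - 1 / x))
    by (apply Rle_Rpower_l; lra).
  assert (E : Rpower (1 / 4) (1 - 1 / x) = / 4 * exp (ln 4 / x)).
  { unfold Rpower. replace (1 / 4) with (/ 4) by field. rewrite ln_Rinv by lra.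
    replace ((1 - 1 / x) * - ln 4) with (- ln 4 + ln 4 / x) by (field; lra).
    rewrite exp_plus, exp_Ropp, exp_ln by lra. reflexivity. }
  assert (H3 := exp_ineq1_le (ln 4 / x)). assert (H4 := ln_4_gt_1).
  assert (x * (1 + ln 4 / x) = x + ln 4) by (field; lra).
  unfold rho. rewrite E in H1. nra.
Qed.

Lemma Rpower_div_mul c s y w : 0 < c -> 0 < s ->
  Rpower (c / s) y * (w * s) = Rpower c y * (w * Rpower s (1 - y)).
Proof.
  intros Hc Hs. unfold Rdiv.
  rewrite <- Rpower_mult_distr, Rpower_Rinv_l by (try apply Rinv_0_lt_compat; lra).
  replace (1 - y) with (- y + 1) by ring. rewrite Rpower_plus, Rpower_1 by lra. ring.
Qed.

Lemma is_derive_open_ext (D : R -> Prop) (f g : R -> R) x l :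
  open D -> D x -> (forall y, D y -> g y = f y) -> is_derive g x l -> is_derive f x l.
Proof.
  intros HD Hx Hfg Hg. apply (is_derive_ext_loc g); [|exact Hg].
  apply (locally_open D); auto.
Qed.

(** * Derivatives along an orbit *)

Section IterateDerivatives.

Variables (F dF d2F : R -> R) (U : R -> Prop).
Hypothesis U_open : open U.
Hypothesis F_derive : forall z, U z -> is_derive F z (dF z).
Hypothesis dF_derive : forall z, U z -> is_derive dF z (d2F z).
Hypothesis dF_pos : forall z, U z -> 0 < dF z.

Fixpoint iter_d1 (m : nat) (x : R) : R :=
  match m with
  | O => 1
  | S m => dF (Nat.iter m F x) * iter_d1 m x
  end.

Fixpoint iter_d2 (m : nat) (x : R) : R :=
  match m with
  | O => 0
  | S m => d2F (Nat.iter m F x) * iter_d1 m x ^ 2 + dF (Nat.iter m F x) * iter_d2 m x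
  end.

Definition orbit_in (m : nat) (x : R) : Prop :=
  forall k, (k < m)%nat -> U (Nat.iter k F x).

Lemma orbit_in_S m x : orbit_in (S m) x -> orbit_in m x /\ U (Nat.iter m F x).
Proof. intros H. split; [intros k Hk|]; apply H; lia. Qed.

Lemma iter_is_derive_loc m x : orbit_in m x ->
  locally x (fun y => is_derive (Nat.iter m F) y (iter_d1 m y) /\
                      is_derive (iter_d1 m) y (iter_d2 m y)).
Proof.
  induction m as [|m IH]; intros Horb.
  - apply filter_forall. intros y. cbn.
    split; [apply (is_derive_id (K := R_AbsRing)) | exact (is_derive_const (K := R_AbsRing) 1 y)].
  - destruct (orbit_in_S m x Horb) as [Horb' HU].
    specialize (IH Horb').
    assert (Hcont : continuous (Nat.iter m F) x).
    { apply (ex_derive_continuous (K := R_AbsRing) (V := R_NormedModule)). exists (iter_d1 m x).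
      exact (proj1 (locally_singleton _ _ IH)). }
    assert (HUloc : locally x (fun y => U (Nat.iter m F y))).
    { apply Hcont. apply (locally_open U); auto. }
    generalize (filter_and _ _ IH HUloc). apply filter_imp.
    intros y [[H1 H2] HUy]. split.
    + cbn [iter_d1]. rewrite Rmult_comm.
      exact (is_derive_comp F (Nat.iter m F) y _ _ (F_derive _ HUy) H1).
    + assert (Hd := is_derive_mult _ _ y _ _
        (is_derive_comp dF (Nat.iter m F) y _ _ (dF_derive _ HUy) H1) H2 Rmult_comm).
      cbn [iter_d1 iter_d2].
      replace (d2F (Nat.iter m F y) * iter_d1 m y ^ 2 + dF (Nat.iter m F y) * iter_d2 m y)
        with (plus (mult (scal (iter_d1 m y) (d2F (Nat.iter m F y))) (iter_d1 m y))
                   (mult (dF (Nat.iter m F y)) (iter_d2 m y))).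
      * exact Hd.
      * cbn. unfold plus, mult, scal; cbn. unfold mult; cbn. ring.
Qed.

Lemma Derive_iter m x : orbit_in m x -> Derive (Nat.iter m F) x = iter_d1 m x.
Proof.
  intros Horb. apply is_derive_unique.
  exact (proj1 (locally_singleton _ _ (iter_is_derive_loc m x Horb))).
Qed.

Lemma Derive_n_iter_2 m x : orbit_in m x -> Derive_n (Nat.iter m F) 2 x = iter_d2 m x.
Proof.
  intros Horb. assert (Hloc := iter_is_derive_loc m x Horb).
  cbn. rewrite (Derive_ext_loc _ (iter_d1 m)).
  - apply is_derive_unique. exact (proj2 (locally_singleton _ _ Hloc)).
  - revert Hloc. apply filter_imp. intros y [Hy _]. apply is_derive_unique, Hy.
Qed.

Lemma iter_d1_pos m x : orbit_in m x -> 0 < iter_d1 m x.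
Proof.
  induction m as [|m IH]; intros Horb; cbn [iter_d1]; [lra|].
  destruct (orbit_in_S m x Horb) as [Horb' HU].
  apply Rmult_lt_0_compat; auto.
Qed.

Lemma iter_d2_le (phi : R -> R) m x :
  (forall z, U z -> d2F z + dF z * phi z <= phi (F z) * dF z ^ 2) ->
  0 <= phi x -> orbit_in m x ->
  iter_d2 m x <= phi (Nat.iter m F x) * iter_d1 m x ^ 2.
Proof.
  intros Hphi Hx0. induction m as [|m IH]; intros Horb.
  - simpl. nra.
  - destruct (orbit_in_S m x Horb) as [Horb' HU].
    cbn [iter_d1 iter_d2]. change (Nat.iter (S m) F x) with (F (Nat.iter m F x)).
    set (z := Nat.iter m F x) in *. set (D := iter_d1 m x) in *.
    assert (Hstep := Hphi z HU). assert (Hdz := dF_pos z HU).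
    assert (HE : dF z * iter_d2 m x <= dF z * (phi z * D ^ 2))
      by (apply Rmult_le_compat_l; [lra | apply IH, Horb']).
    assert (HD2 : 0 <= D ^ 2) by nra.
    assert ((d2F z + dF z * phi z) * D ^ 2 <= phi (F z) * dF z ^ 2 * D ^ 2)
      by (apply Rmult_le_compat_r; lra).
    replace ((dF z * D) ^ 2) with (dF z ^ 2 * D ^ 2) by ring. nra.
Qed.

Lemma iter_d1_ge (G : nat -> R -> R) m x :
  (forall k z, U z -> G (S k) (F z) <= dF z * G k z) -> orbit_in m x ->
  G m (Nat.iter m F x) <= iter_d1 m x * G O x.
Proof.
  intros HG. induction m as [|m IH]; intros Horb.
  - simpl. lra.
  - destruct (orbit_in_S m x Horb) as [Horb' HU].
    cbn [iter_d1]. change (Nat.iter (S m) F x) with (F (Nat.iter m F x)).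
    eapply Rle_trans; [apply HG, HU|]. rewrite Rmult_assoc.
    apply Rmult_le_compat_l; [left; apply dF_pos, HU | apply IH, Horb'].
Qed.

End IterateDerivatives.

(** * The map T *)

Definition regular (z : R) : Prop := 0 < z < 1 /\ z <> 1 / 2.

Lemma regular_open : open regular.
Proof.
  unfold regular. apply open_and; [apply open_and; [apply open_gt | apply open_lt] | apply open_neq].
Qed.

Lemma regular_cases z : regular z -> 0 < z < 1 / 2 \/ 1 / 2 < z < 1.
Proof.
  intros [Hz Hne]. destruct (Rtotal_order z (1 / 2)) as [H|[H|H]];
    [left; lra | contradiction | right; lra].
Qed.

Lemma left_branch_open : open (fun y => 0 < y < 1 / 2).
Proof. apply open_and; [apply open_gt | apply open_lt]. Qed.

Section IntermittentMap.

Variables a bt : R.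
Hypothesis Ha : 0 < a < 1.
Hypothesis Hb : 1 <= bt.

Local Notation T := (Tmap a bt).

Lemma Tmap_left z : 0 < z < 1 / 2 -> T z = z * (1 + Rpower (2 * z) a).
Proof.
  intros Hz. unfold Tmap, rpow.
  destruct (Rlt_dec z (1 / 2)); [|lra]. destruct (Rlt_dec 0 (2 * z)); [reflexivity | lra].
Qed.

Lemma Tmap_right z : 1 / 2 < z -> T z = Rpower (2 * (z - 1 / 2)) bt.
Proof.
  intros Hz. unfold Tmap, rpow.
  destruct (Rlt_dec z (1 / 2)); [lra|]. destruct (Rlt_dec 0 (2 * (z - 1 / 2))); [reflexivity | lra].
Qed.

Lemma Tmap_0 : T 0 = 0.
Proof. unfold Tmap. destruct (Rlt_dec 0 (1 / 2)); [ring | lra]. Qed.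

Lemma Tmap_half : T (1 / 2) = 0.
Proof.
  unfold Tmap, rpow. destruct (Rlt_dec (1 / 2) (1 / 2)); [lra|].
  destruct (Rlt_dec 0 (2 * (1 / 2 - 1 / 2))); [lra | reflexivity].
Qed.

(* Only evaluated at [regular] points, where they are the derivatives of [T]. *)
Definition dT (z : R) : R :=
  if Rlt_dec z (1 / 2) then 1 + (1 + a) * Rpower (2 * z) a
  else 2 * bt * Rpower (2 * (z - 1 / 2)) (bt - 1).

Definition d2T (z : R) : R :=
  if Rlt_dec z (1 / 2) then (1 + a) * a * 2 * Rpower (2 * z) (a - 1)
  else 4 * bt * (bt - 1) * Rpower (2 * (z - 1 / 2)) (bt - 2).

Lemma dT_left z : z < 1 / 2 -> dT z = 1 + (1 + a) * Rpower (2 * z) a.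
Proof. intros Hz. unfold dT. destruct (Rlt_dec z (1 / 2)); [reflexivity | lra]. Qed.

Lemma dT_right z : 1 / 2 < z -> dT z = 2 * bt * Rpower (2 * (z - 1 / 2)) (bt - 1).
Proof. intros Hz. unfold dT. destruct (Rlt_dec z (1 / 2)); [lra | reflexivity]. Qed.

Lemma d2T_left z : z < 1 / 2 -> d2T z = (1 + a) * a * 2 * Rpower (2 * z) (a - 1).
Proof. intros Hz. unfold d2T. destruct (Rlt_dec z (1 / 2)); [reflexivity | lra]. Qed.

Lemma d2T_right z : 1 / 2 < z -> d2T z = 4 * bt * (bt - 1) * Rpower (2 * (z - 1 / 2)) (bt - 2).
Proof. intros Hz. unfold d2T. destruct (Rlt_dec z (1 / 2)); [lra | reflexivity]. Qed.

Lemma Tmap_derive z : regular z -> is_derive T z (dT z).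
Proof.
  intros Hz. destruct (regular_cases z Hz) as [Hl|Hr].
  - rewrite dT_left by lra.
    apply (is_derive_open_ext _ _ (fun y => y * (1 + Rpower (2 * y) a)) z _ left_branch_open Hl).
    { intros y Hy. symmetry. apply Tmap_left, Hy. }
    unfold Rpower. auto_derive; [lra|]. field. lra.
  - rewrite dT_right, Rpower_minus_1 by lra.
    apply (is_derive_open_ext _ _ (fun y => Rpower (2 * (y - 1 / 2)) bt) z _ (open_gt (1 / 2))).
    { lra. }
    { intros y Hy. symmetry. apply Tmap_right, Hy. }
    unfold Rpower, Rminus. auto_derive; [lra|]. field. lra.
Qed.

Lemma dT_derive z : regular z -> is_derive dT z (d2T z).
Proof.
  intros Hz. destruct (regular_cases z Hz) as [Hl|Hr].
  - rewrite d2T_left, Rpower_minus_1 by lra.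
    apply (is_derive_open_ext _ _ (fun y => 1 + (1 + a) * Rpower (2 * y) a) z _ left_branch_open Hl).
    { intros y Hy. symmetry. apply dT_left. lra. }
    unfold Rpower. auto_derive; [lra|]. field. lra.
  - rewrite d2T_right by lra. replace (bt - 2) with (bt - 1 - 1) by ring.
    rewrite Rpower_minus_1 by lra.
    apply (is_derive_open_ext _ _ (fun y => 2 * bt * Rpower (2 * (y - 1 / 2)) (bt - 1)) z _
      (open_gt (1 / 2))).
    { lra. }
    { intros y Hy. symmetry. apply dT_right, Hy. }
    unfold Rpower, Rminus. auto_derive; [lra|]. field. lra.
Qed.

Lemma dT_pos z : regular z -> 0 < dT z.
Proof.
  intros Hz. destruct (regular_cases z Hz) as [Hl|Hr].
  - rewrite dT_left by lra. assert (0 < Rpower (2 * z) a) by apply Rpower_pos. nra.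
  - rewrite dT_right by lra. assert (0 < Rpower (2 * (z - 1 / 2)) (bt - 1)) by apply Rpower_pos.
    nra.
Qed.

Lemma Tmap_range z : 0 <= z < 1 -> 0 <= T z < 1.
Proof.
  intros Hz. destruct (Rle_lt_dec (1 / 2) z) as [Hr|Hl].
  - destruct (Rle_lt_or_eq_dec _ _ Hr) as [Hr'|<-]; [|rewrite Tmap_half; lra].
    rewrite Tmap_right by lra.
    split; [left; apply Rpower_pos | apply Rpower_lt_1; lra].
  - destruct (Rle_lt_or_eq_dec _ _ (proj1 Hz)) as [Hz0|<-]; [|rewrite Tmap_0; lra].
    rewrite Tmap_left by lra.
    assert (0 < Rpower (2 * z) a < 1) by (split; [apply Rpower_pos | apply Rpower_lt_1; lra]).
    nra.
Qed.

Lemma iter_Tmap_range m x : 0 <= x < 1 -> 0 <= Nat.iter m T x < 1.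
Proof. intros Hx. induction m as [|m IH]; [exact Hx | apply Tmap_range, IH]. Qed.

(* [0] is fixed and [1/2] is mapped to [0], so an orbit that is still positive never met them. *)
Lemma orbit_regular m x : 0 < x < 1 -> 0 < Nat.iter m T x -> orbit_in T regular m x.
Proof.
  intros Hx. induction m as [|m IH]; intros Hpos k Hk; [lia|].
  change (Nat.iter (S m) T x) with (T (Nat.iter m T x)) in Hpos.
  assert (Hrange := iter_Tmap_range m x ltac:(lra)).
  assert (Hreg : regular (Nat.iter m T x)).
  { split; [split|].
    - destruct (proj1 Hrange) as [H| H]; [exact H|]. rewrite <- H, Tmap_0 in Hpos. lra.
    - apply Hrange.
    - intros H. rewrite H, Tmap_half in Hpos. lra. }
  destruct (Nat.eq_dec k m) as [->|Hne]; [exact Hreg|].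
  apply IH; [apply (proj1 (proj1 Hreg)) | lia].
Qed.

Lemma Tmap_distortion z : regular z -> d2T z + dT z * (2 / z) <= 2 / T z * dT z ^ 2.
Proof.
  intros Hz. destruct (regular_cases z Hz) as [Hl|Hr].
  - rewrite Tmap_left, dT_left, d2T_left, Rpower_minus_1 by lra.
    set (t := Rpower (2 * z) a). assert (Ht : 0 < t) by apply Rpower_pos.
    assert (E : 2 / (z * (1 + t)) * (1 + (1 + a) * t) ^ 2
                - ((1 + a) * a * 2 * (t / (2 * z)) + (1 + (1 + a) * t) * (2 / z))
                = a * t * ((1 - a) + (1 + a) * t) / (z * (1 + t))) by (field; lra).
    assert (0 <= a * t * ((1 - a) + (1 + a) * t) / (z * (1 + t)))
      by (apply Rdiv_le_0_compat; [repeat apply Rmult_le_pos | ]; nra).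
    lra.
  - rewrite Tmap_right, dT_right, d2T_right by lra.
    replace (bt - 2) with (bt - 1 - 1) by ring.
    set (u := 2 * (z - 1 / 2)). assert (Hu : 0 < u < 1) by (unfold u; lra).
    assert (Ez : z = (u + 1) / 2) by (unfold u; field). rewrite Ez.
    rewrite !Rpower_minus_1 by lra.
    set (P := Rpower u bt). assert (HP : 0 < P) by apply Rpower_pos.
    assert (E : 2 / P * (2 * bt * (P / u)) ^ 2
                - (4 * bt * (bt - 1) * (P / u / u) + 2 * bt * (P / u) * (2 / ((u + 1) / 2)))
                = 4 * bt * P * (bt * (u + 1) + (1 - u)) / (u ^ 2 * (u + 1))) by (field; lra).
    assert (0 <= 4 * bt * P * (bt * (u + 1) + (1 - u)) / (u ^ 2 * (u + 1)))
      by (apply Rdiv_le_0_compat; [repeat apply Rmult_le_pos | ]; nra).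
    lra.
Qed.

(** * An expanding weight *)

Definition lyapA : R := 4 / a.
Definition gam : R := 1 + 1 / (a * bt).
Definition eps : R := Rpower rho (1 / gam) - 1.
(* Large enough for [lyapK_left] and [lyapK_right]. *)
Definition lyapK : R := (1 + lyapA) / (1 - Rpower 2 (- a)) + (1 + 2 * lyapA) / eps + 1.
Definition tw (z : R) : R := Rpower (2 * z) a.
Definition tau (z : R) : R := lyapA / tw z.
Definition hw (z : R) : R := z * tw z / (1 + tw z).
Definition lyap (k : nat) (z : R) : R := Rpower (INR k + lyapK + tau z) gam * hw z.
Definition lyapM : R := Rpower (2 * lyapK + lyapA) gam.

Lemma lyapA_pos : 0 < lyapA.
Proof. unfold lyapA. apply Rdiv_lt_0_compat; lra. Qed.

Lemma gam_gt_1 : 1 < gam.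
Proof. unfold gam. assert (0 < 1 / (a * bt)) by (apply Rdiv_lt_0_compat; nra). lra. Qed.

Lemma eps_pos : 0 < eps.
Proof.
  unfold eps. assert (H := gam_gt_1). assert (H1 := rho_gt_1).
  assert (Hlt : Rpower 1 (1 / gam) < Rpower rho (1 / gam))
    by (apply Rlt_Rpower_l; [apply Rdiv_lt_0_compat|]; lra).
  rewrite Rpower_1_l in Hlt. lra.
Qed.

Lemma Rpower_1_plus_eps : Rpower (1 + eps) gam = rho.
Proof.
  unfold eps. replace (1 + (Rpower rho (1 / gam) - 1)) with (Rpower rho (1 / gam)) by ring.
  assert (Hg := gam_gt_1). assert (Hr := rho_gt_1).
  rewrite Rpower_mult. replace (1 / gam * gam) with 1 by (field; lra). apply Rpower_1. lra.
Qed.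

Lemma lyapK_ge_1 : 1 <= lyapK.
Proof.
  assert (HA := lyapA_pos). assert (He := eps_pos). assert (H2 := Rpower_2_neg_lt_1 a ltac:(lra)).
  assert (0 < (1 + lyapA) / (1 - Rpower 2 (- a))) by (apply Rdiv_lt_0_compat; lra).
  assert (0 < (1 + 2 * lyapA) / eps) by (apply Rdiv_lt_0_compat; lra).
  unfold lyapK. lra.
Qed.

Lemma lyapK_left : (1 + lyapA) / lyapK <= 1 - Rpower 2 (- a).
Proof.
  assert (HA := lyapA_pos). assert (He := eps_pos). assert (H2 := Rpower_2_neg_lt_1 a ltac:(lra)).
  assert (HK := lyapK_ge_1).
  apply Rdiv_le_swap; [lra | lra |].
  assert (0 < (1 + 2 * lyapA) / eps) by (apply Rdiv_lt_0_compat; lra).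
  unfold lyapK. lra.
Qed.

Lemma lyapK_right : (1 + 2 * lyapA) / lyapK <= eps.
Proof.
  assert (HA := lyapA_pos). assert (He := eps_pos). assert (H2 := Rpower_2_neg_lt_1 a ltac:(lra)).
  assert (HK := lyapK_ge_1).
  apply Rdiv_le_swap; [lra | lra |].
  assert (0 < (1 + lyapA) / (1 - Rpower 2 (- a))) by (apply Rdiv_lt_0_compat; lra).
  unfold lyapK. lra.
Qed.

Lemma tw_pos z : 0 < tw z.
Proof. apply Rpower_pos. Qed.

Lemma tau_pos z : 0 < tau z.
Proof. unfold tau. apply Rdiv_lt_0_compat; [apply lyapA_pos | apply tw_pos]. Qed.

Lemma hw_pos z : 0 < z -> 0 < hw z.
Proof. intros Hz. unfold hw. assert (Ht := tw_pos z). apply Rdiv_lt_0_compat; nra. Qed.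

Lemma hw_le z : 0 < z -> hw z <= z * tw z.
Proof.
  intros Hz. unfold hw. assert (Ht := tw_pos z).
  apply (Rmult_le_reg_r (1 + tw z)); [lra|].
  replace (z * tw z / (1 + tw z) * (1 + tw z)) with (z * tw z) by (field; lra).
  nra.
Qed.

Lemma hw_le_compat p q : 0 < p <= q -> hw p <= hw q.
Proof.
  intros Hpq. unfold hw.
  assert (H1 : tw p <= tw q) by (unfold tw; apply Rle_Rpower_l; lra).
  assert (H2 := tw_pos p). assert (H3 := tw_pos q).
  apply (Rmult_le_reg_r ((1 + tw p) * (1 + tw q))); [nra|].
  replace (p * tw p / (1 + tw p) * ((1 + tw p) * (1 + tw q))) with (p * tw p * (1 + tw q))
    by (field; lra).
  replace (q * tw q / (1 + tw q) * ((1 + tw p) * (1 + tw q))) with (q * tw q * (1 + tw p))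
    by (field; lra).
  assert (p * tw p <= q * tw q) by (apply Rmult_le_compat; lra).
  assert (p * (tw p * tw q) <= q * (tw p * tw q)) by (apply Rmult_le_compat_r; nra).
  nra.
Qed.

Lemma tw_Tmap_left z : 0 < z < 1 / 2 -> tw (T z) = tw z * Rpower (1 + tw z) a.
Proof.
  intros Hz. assert (Ht := tw_pos z). unfold tw at 1. rewrite Tmap_left by lra.
  replace (2 * (z * (1 + Rpower (2 * z) a))) with (2 * z * (1 + tw z)) by (unfold tw; ring).
  rewrite <- Rpower_mult_distr by lra. reflexivity.
Qed.

Lemma tau_Tmap_left z : 0 < z < 1 / 2 -> tau (T z) + 1 <= tau z.
Proof.
  intros Hz. unfold tau. rewrite tw_Tmap_left by exact Hz.
  set (t := tw z). assert (Ht : 0 < t < 1) by (split; [apply tw_pos | apply Rpower_lt_1; lra]).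
  set (P := Rpower (1 + t) a). assert (HP : 0 < P) by apply Rpower_pos.
  assert (HP1 := Rpower_1_plus_le a t ltac:(lra) ltac:(lra)). fold P in HP1.
  assert (HP2 := Rpower_1_plus_ge a t ltac:(lra) ltac:(lra)). fold P in HP2.
  assert (Hgain : t * P <= lyapA * (P - 1)).
  { assert (Hhalf : t / 2 <= t / (1 + t))
      by (apply Rmult_le_compat_l; [|apply Rinv_le_contravar]; lra).
    assert (lyapA * (a * (t / (1 + t))) <= lyapA * (P - 1))
      by (apply Rmult_le_compat_l; [left; apply lyapA_pos | lra]).
    assert (lyapA * (a * (t / (1 + t))) = 4 * (t / (1 + t))) by (unfold lyapA; field; lra).
    nra. }
  assert (HA := lyapA_pos).
  apply (Rmult_le_reg_r (t * P)); [nra|].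
  replace ((lyapA / (t * P) + 1) * (t * P)) with (lyapA + t * P) by (field; nra).
  replace (lyapA / t * (t * P)) with (lyapA * P) by (field; lra).
  lra.
Qed.

Lemma hw_Tmap_left z : 0 < z < 1 / 2 -> hw (T z) <= dT z * hw z.
Proof.
  intros Hz. unfold hw. rewrite tw_Tmap_left, Tmap_left, dT_left by lra. fold (tw z).
  set (t := tw z). assert (Ht : 0 < t < 1) by (split; [apply tw_pos | apply Rpower_lt_1; lra]).
  set (P := Rpower (1 + t) a). assert (HP : 0 < P) by apply Rpower_pos.
  assert (HP1 := Rpower_1_plus_le a t ltac:(lra) ltac:(lra)). fold P in HP1.
  (* [(1 + (1+a) t)(1 + t P) - (1+t)^2 P >= (1+a t - P)(1 + t - a t^2) + a^2 t^3] *)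
  assert (Hkey : (1 + t) ^ 2 * P <= (1 + (1 + a) * t) * (1 + t * P)).
  { assert (0 < 1 + t - a * t * t) by nra.
    assert (0 <= (1 + a * t - P) * (1 + t - a * t * t)) by (apply Rmult_le_pos; lra).
    assert (0 <= a * a * (t * t * t)) by (apply Rmult_le_pos; nra).
    nra. }
  apply (Rmult_le_reg_r ((1 + t * P) * (1 + t))); [nra|].
  replace (z * (1 + t) * (t * P) / (1 + t * P) * ((1 + t * P) * (1 + t)))
    with (z * t * ((1 + t) ^ 2 * P)) by (field; nra).
  replace ((1 + (1 + a) * t) * (z * t / (1 + t)) * ((1 + t * P) * (1 + t)))
    with (z * t * ((1 + (1 + a) * t) * (1 + t * P))) by (field; nra).
  apply Rmult_le_compat_l; [nra | exact Hkey].
Qed.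

Lemma lyap_step_left k z : 0 < z < 1 / 2 -> lyap (S k) (T z) <= dT z * lyap k z.
Proof.
  intros Hz. unfold lyap. rewrite S_INR.
  assert (Hk := pos_INR k). assert (HK := lyapK_ge_1). assert (Hg := gam_gt_1).
  assert (Htau := tau_Tmap_left z Hz). assert (Htau0 := tau_pos (T z)).
  assert (Hh := hw_Tmap_left z Hz).
  assert (Hh0 : 0 < hw (T z)) by (apply hw_pos; rewrite Tmap_left by lra;
    assert (0 < tw z) by apply tw_pos; unfold tw in *; nra).
  assert (Hpow : Rpower (INR k + 1 + lyapK + tau (T z)) gam
                 <= Rpower (INR k + lyapK + tau z) gam) by (apply Rle_Rpower_l; lra).
  assert (0 < Rpower (INR k + lyapK + tau z) gam) by apply Rpower_pos.
  apply Rle_trans with (Rpower (INR k + lyapK + tau z) gam * (dT z * hw z)).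
  - apply Rmult_le_compat; [left; apply Rpower_pos | lra | exact Hpow | exact Hh].
  - right. ring.
Qed.

Lemma dT_right_Tmap z : 1 / 2 < z -> dT z = 2 * bt * Rpower (T z) (1 - 1 / bt).
Proof.
  intros Hz. rewrite dT_right, Tmap_right, Rpower_mult by lra.
  replace (bt * (1 - 1 / bt)) with (bt - 1) by (field; lra). reflexivity.
Qed.

Lemma hw_ge_quarter z : 1 / 2 < z -> 1 / 4 <= hw z.
Proof.
  intros Hz. unfold hw.
  assert (Ht : 1 < tw z).
  { unfold tw. rewrite <- (Rpower_O (2 * z)) at 1 by lra. apply Rpower_lt; lra. }
  apply (Rmult_le_reg_r (1 + tw z)); [lra|].
  replace (z * tw z / (1 + tw z) * (1 + tw z)) with (z * tw z) by (field; lra).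
  nra.
Qed.

(* [alpha (1 - gam) = - 1/beta], so [w t(w)^(1 - gam) = (2w)^(1 - 1/beta) / 2]. *)
Lemma Rpower_div_tw c w : 0 < c -> 0 < w ->
  Rpower (c / tw w) gam * (w * tw w) = Rpower c gam * (/ 2 * Rpower (2 * w) (1 - 1 / bt)).
Proof.
  intros Hc Hw. rewrite Rpower_div_mul by (try apply tw_pos; lra). f_equal.
  unfold tw. rewrite Rpower_mult.
  replace (a * (1 - gam)) with (- (1 / bt)) by (unfold gam; field; lra).
  replace (1 - 1 / bt) with (1 + - (1 / bt)) by ring.
  rewrite Rpower_plus, Rpower_1 by lra. field.
Qed.

Definition lyap_jump (w : R) : R := 1 + (1 + tau w) / lyapK.

Lemma lyap_jump_small z : 1 / 2 < z < 1 -> T z <= 1 / 4 ->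
  Rpower (lyap_jump (T z)) gam * hw (T z) <= dT z * hw z.
Proof.
  intros Hz Hw4. rewrite dT_right_Tmap by lra.
  set (w := T z) in *.
  assert (Hw : 0 < w) by (unfold w; rewrite Tmap_right by lra; apply Rpower_pos).
  assert (HA := lyapA_pos). assert (HK := lyapK_ge_1). assert (HKl := lyapK_left).
  assert (Hg := gam_gt_1). assert (H2a := Rpower_2_neg_lt_1 a ltac:(lra)).
  set (s := tw w). assert (Hs : 0 < s) by apply tw_pos.
  assert (Hs2 : s <= Rpower 2 (- a)).
  { unfold s, tw. rewrite <- Rpower_Rinv_l by lra. apply Rle_Rpower_l; lra. }
  set (Y := s + (s + lyapA) / lyapK).
  assert (HY : 0 < Y <= 1).
  { assert (0 < (s + lyapA) / lyapK) by (apply Rdiv_lt_0_compat; lra).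
    assert ((s + lyapA) / lyapK <= (1 + lyapA) / lyapK)
      by (apply Rmult_le_compat_r; [left; apply Rinv_0_lt_compat|]; lra).
    unfold Y. lra. }
  assert (EX : lyap_jump w = Y / s) by (unfold lyap_jump, Y, tau; fold s; field; lra).
  rewrite EX.
  apply Rle_trans with (Rpower (Y / s) gam * (w * s)).
  { apply Rmult_le_compat_l; [left; apply Rpower_pos | apply hw_le, Hw]. }
  unfold s. rewrite Rpower_div_tw, <- Rpower_mult_distr by lra.
  set (W := Rpower w (1 - 1 / bt)). assert (HW : 0 < W) by apply Rpower_pos.
  assert (H2 := Rpower_2_le bt Hb). assert (H2pos : 0 < Rpower 2 (1 - 1 / bt)) by apply Rpower_pos.
  assert (HYg : Rpower Y gam <= 1) by (apply Rpower_le_1; lra).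
  assert (Hhz := hw_ge_quarter z ltac:(lra)).
  apply Rle_trans with (1 * (/ 2 * (Rpower 2 (1 - 1 / bt) * W))).
  { apply Rmult_le_compat_r; [nra | exact HYg]. }
  assert (Rpower 2 (1 - 1 / bt) * W <= bt * W) by (apply Rmult_le_compat_r; lra).
  assert (bt * W * (1 / 4) <= bt * W * hw z) by (apply Rmult_le_compat_l; nra).
  lra.
Qed.

Lemma lyap_jump_large z : 1 / 2 < z < 1 -> 1 / 4 < T z ->
  Rpower (lyap_jump (T z)) gam * hw (T z) <= dT z * hw z.
Proof.
  intros Hz Hw4. rewrite dT_right_Tmap by lra.
  assert (Hwz : T z <= z).
  { rewrite Tmap_right by lra. assert (Rpower (2 * (z - 1 / 2)) bt <= 2 * (z - 1 / 2))
      by (apply Rpower_le_self; lra). lra. }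
  set (w := T z) in *.
  assert (HA := lyapA_pos). assert (HK := lyapK_ge_1). assert (HKr := lyapK_right).
  assert (Hg := gam_gt_1).
  assert (Hs : 1 / 2 <= tw w).
  { unfold tw. apply Rle_trans with (Rpower (1 / 2) a).
    - unfold Rpower. rewrite <- (exp_ln (1 / 2)) at 1 by lra. apply exp_le_exp.
      assert (ln (1 / 2) < 0) by (rewrite <- ln_1; apply ln_increasing; lra). nra.
    - apply Rle_Rpower_l; lra. }
  assert (Htau : tau w <= 2 * lyapA).
  { unfold tau. apply Rle_div_l; [lra|]. nra. }
  assert (HX : 1 <= lyap_jump w <= 1 + eps).
  { unfold lyap_jump. assert (0 < (1 + tau w) / lyapK) by (apply Rdiv_lt_0_compat;
      [assert (H := tau_pos w); lra | lra]).
    assert ((1 + tau w) / lyapK <= (1 + 2 * lyapA) / lyapK)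
      by (apply Rmult_le_compat_r; [left; apply Rinv_0_lt_compat|]; lra).
    lra. }
  assert (Hrho : Rpower (lyap_jump w) gam <= rho)
    by (rewrite <- Rpower_1_plus_eps; apply Rle_Rpower_l; lra).
  assert (Hslope := rho_le bt w Hb ltac:(lra)).
  assert (Hhw : hw w <= hw z) by (apply hw_le_compat; split; [lra | exact Hwz]).
  assert (Hw0 : 0 < hw w) by (apply hw_pos; lra).
  assert (Hz0 : 0 < hw z) by (apply hw_pos; lra).
  apply Rle_trans with (rho * hw z).
  - apply Rmult_le_compat; [left; apply Rpower_pos | lra | exact Hrho | exact Hhw].
  - apply Rmult_le_compat_r; lra.
Qed.

Lemma lyap_step_right k z : 1 / 2 < z < 1 -> lyap (S k) (T z) <= dT z * lyap k z.
Proof.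
  intros Hz.
  assert (Hcore : Rpower (lyap_jump (T z)) gam * hw (T z) <= dT z * hw z).
  { destruct (Rle_lt_dec (T z) (1 / 4)).
    - apply lyap_jump_small; assumption.
    - apply lyap_jump_large; assumption. }
  set (w := T z) in *.
  assert (Hw : 0 < w) by (unfold w; rewrite Tmap_right by lra; apply Rpower_pos).
  assert (Hk := pos_INR k). assert (HK := lyapK_ge_1). assert (Hg := gam_gt_1).
  assert (Htw := tau_pos w). assert (Htz := tau_pos z).
  set (B := INR k + lyapK + tau z).
  assert (HX : 1 <= lyap_jump w).
  { unfold lyap_jump. assert (0 < (1 + tau w) / lyapK) by (apply Rdiv_lt_0_compat; lra). lra. }
  (* [B >= K], hence [B (1 + (1 + tau w)/K) >= B + 1 + tau w]. *)
  assert (HBX : INR (S k) + lyapK + tau w <= B * lyap_jump w).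
  { rewrite S_INR. unfold lyap_jump.
    assert (HB1 : 1 <= B / lyapK) by (apply Rle_div_r; unfold B; lra).
    replace (B * (1 + (1 + tau w) / lyapK)) with (B + B / lyapK * (1 + tau w)) by (field; lra).
    unfold B in *. nra. }
  unfold lyap. fold B.
  assert (HR : Rpower (INR (S k) + lyapK + tau w) gam <= Rpower B gam * Rpower (lyap_jump w) gam).
  { rewrite Rpower_mult_distr by (unfold B; lra). apply Rle_Rpower_l; [lra|].
    split; [rewrite S_INR; lra | exact HBX]. }
  assert (0 < hw w) by (apply hw_pos, Hw).
  assert (0 < Rpower B gam) by apply Rpower_pos.
  apply Rle_trans with (Rpower B gam * (Rpower (lyap_jump w) gam * hw w)).
  - rewrite <- Rmult_assoc. apply Rmult_le_compat_r; lra.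
  - replace (dT z * (Rpower B gam * hw z)) with (Rpower B gam * (dT z * hw z)) by ring.
    apply Rmult_le_compat_l; lra.
Qed.

Lemma lyap_step k z : regular z -> lyap (S k) (T z) <= dT z * lyap k z.
Proof.
  intros Hz. destruct (regular_cases z Hz); [apply lyap_step_left | apply lyap_step_right]; assumption.
Qed.

Lemma lyap_0_le x : 0 < x < 1 -> lyap 0 x <= lyapM.
Proof.
  intros Hx. unfold lyap, lyapM. rewrite Rplus_0_l.
  assert (HK := lyapK_ge_1). assert (HA := lyapA_pos). assert (Hg := gam_gt_1).
  set (t := tw x).
  assert (Ht : 0 < t < 2).
  { split; [apply tw_pos|]. unfold t, tw. apply Rlt_le_trans with (Rpower 2 a).
    - apply Rlt_Rpower_l; lra.
    - rewrite <- (Rpower_1 2) at 2 by lra. apply Rle_Rpower; lra. }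
  assert (Hbase : lyapK + tau x <= (2 * lyapK + lyapA) / t).
  { unfold tau. fold t. apply Rle_div_r; [lra|].
    replace ((lyapK + lyapA / t) * t) with (lyapK * t + lyapA) by (field; lra). nra. }
  assert (Hpow : Rpower (lyapK + tau x) gam <= Rpower ((2 * lyapK + lyapA) / t) gam)
    by (apply Rle_Rpower_l; [lra | split; [assert (H := tau_pos x) |]; lra]).
  apply Rle_trans with (Rpower ((2 * lyapK + lyapA) / t) gam * (x * t)).
  { apply Rmult_le_compat; [left; apply Rpower_pos | left; apply hw_pos; lra | exact Hpow |].
    apply hw_le. lra. }
  unfold t. rewrite Rpower_div_tw by lra.
  assert (Hexp := one_minus_inv_bounds bt Hb).
  assert (H2x : Rpower (2 * x) (1 - 1 / bt) <= 2).
  { apply Rle_trans with (Rpower 2 (1 - 1 / bt)); [apply Rle_Rpower_l; lra|].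
    rewrite <- (Rpower_1 2) at 2 by lra. apply Rle_Rpower; lra. }
  assert (0 < Rpower (2 * lyapK + lyapA) gam) by apply Rpower_pos.
  nra.
Qed.

Lemma lyap_ge m b z : (1 <= m)%nat -> 0 < b <= z -> Rpower (INR m) gam * hw b <= lyap m z.
Proof.
  intros Hm Hz. unfold lyap.
  assert (HK := lyapK_ge_1). assert (Hg := gam_gt_1). assert (Htz := tau_pos z).
  assert (HmR : 1 <= INR m) by (apply (le_INR 1); exact Hm).
  apply Rmult_le_compat; [left; apply Rpower_pos | left; apply hw_pos; lra | |].
  - apply Rle_Rpower_l; lra.
  - apply hw_le_compat; lra.
Qed.

Lemma iter_d1_lower m x b : (1 <= m)%nat -> 0 < x < 1 -> 0 < b <= Nat.iter m T x ->
  Rpower (INR m) gam * hw b <= iter_d1 T dT m x * lyapM.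
Proof.
  intros Hm Hx Hb0.
  assert (Horb := orbit_regular m x Hx ltac:(lra)).
  eapply Rle_trans; [apply (lyap_ge m b _ Hm Hb0)|].
  eapply Rle_trans; [apply (iter_d1_ge _ _ regular dT_pos lyap m x lyap_step Horb)|].
  apply Rmult_le_compat_l; [left; apply (iter_d1_pos _ _ regular dT_pos), Horb | apply lyap_0_le, Hx].
Qed.

Lemma iter_d1_inv_le m x b : (1 <= m)%nat -> 0 < x < 1 -> 0 < b <= Nat.iter m T x ->
  / iter_d1 T dT m x <= lyapM / hw b * Rpower (INR m) (-1 - 1 / (a * bt)).
Proof.
  intros Hm Hx Hbx.
  assert (Hlow := iter_d1_lower m x b Hm Hx Hbx).
  assert (HM : 0 < lyapM) by apply Rpower_pos. assert (Hh := hw_pos b (proj1 Hbx)).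
  set (P := Rpower (INR m) gam) in *. assert (HP : 0 < P) by apply Rpower_pos.
  replace (Rpower (INR m) (-1 - 1 / (a * bt))) with (/ P)
    by (unfold P, gam; rewrite <- Rpower_Ropp; f_equal; ring).
  replace (lyapM / hw b * / P) with (/ (P * hw b / lyapM)) by (field; lra).
  apply Rinv_le_contravar; [apply Rdiv_lt_0_compat; nra | apply Rle_div_l; lra].
Qed.

Lemma iter_d2_ratio_le m x b : 0 < x < 1 -> 0 < b <= Nat.iter m T x ->
  iter_d2 T dT d2T m x / iter_d1 T dT m x ^ 2 <= 2 / b.
Proof.
  intros Hx Hbx.
  assert (Horb := orbit_regular m x Hx ltac:(lra)).
  assert (HD := iter_d1_pos _ _ regular dT_pos m x Horb).
  apply Rle_div_l; [apply pow_lt, HD|].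
  eapply Rle_trans; [apply (iter_d2_le _ _ _ regular dT_pos (fun z => 2 / z))|].
  - intros z Hz. apply Tmap_distortion, Hz.
  - left. apply Rdiv_lt_0_compat; lra.
  - exact Horb.
  - apply Rmult_le_compat_r; [apply pow_le; lra|].
    apply Rmult_le_compat_l; [lra|]. apply Rinv_le_contravar; lra.
Qed.

End IntermittentMap.

Lemma iter_f1_0 a n : Nat.iter n (f1 a) 0 = 0.
Proof. induction n as [|n IH]; [reflexivity|]. simpl. rewrite IH. unfold f1. ring. Qed.

Theorem lemma2p11 (alpha beta : R) (hD : in_D alpha beta) (l : nat) (hl : (1 <= l)%nat)
  (b : R) (hb0 : 0 <= b) (hb : Nat.iter l (f1 alpha) b = 1/2) :
  exists C1 C2 : R, 0 < C1 /\ 0 < C2 /\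
    forall (m : nat), (1 <= m)%nat ->
    forall x : R, 0 < x < 1 -> Titer alpha beta m x >= b ->
      / Derive (Titer alpha beta m) x
        <= C1 * Rpower (INR m) (-1 - 1 / (alpha * beta)) /\
      Derive_n (Titer alpha beta m) 2 x / (Derive (Titer alpha beta m) x) ^ 2 <= C2.
Proof.
  destruct hD as [Ha [Hb _]].
  assert (Hb0 : 0 < b).
  { destruct hb0 as [H| <-]; [exact H|]. rewrite iter_f1_0 in hb. lra. }
  exists (lyapM alpha beta / hw alpha b), (2 / b).
  split; [apply Rdiv_lt_0_compat; [apply Rpower_pos | apply hw_pos, Hb0]|].
  split; [apply Rdiv_lt_0_compat; lra|].
  intros m Hm x Hx Hxb. change (Titer alpha beta m) with (Nat.iter m (Tmap alpha beta)) in *.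
  assert (Horb := orbit_regular alpha beta Ha Hb m x Hx ltac:(lra)).
  rewrite (Derive_iter _ _ _ _ regular_open (Tmap_derive alpha beta) (dT_derive alpha beta) m x Horb),
    (Derive_n_iter_2 _ _ _ _ regular_open (Tmap_derive alpha beta) (dT_derive alpha beta) m x Horb).
  split; [apply iter_d1_inv_le | apply iter_d2_ratio_le]; auto; lra.
Qed.
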